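(* Let $n \geq 3$, let $C_n$ be the cycle on $n$ vertices, and let $G$ be a $k$-fold cover of $C_n$. Then $\gamma(G) \geq \frac{2}{3}\,k\,\gamma(C_n)$.
   Context: All graphs are finite, simple and undirected. A graph $G$ is a cover of a graph $F$ if there is an onto map $\pi: V(G)\to V(F)$ such that for every vertex $v$ of $G$, $\pi$ maps the neighbours of $v$ in $G$ bijectively onto the neighbours of $\pi(v)$ in $F$; the cover is $k$-fold if every fibre $\pi^{-1}(u)$ has exactly $k$ vertices. $\gamma(\cdot)$ denotes the domination number: the minimum size of a set $S$ of vertices such that every vertex not in $S$ has a neighbour in $S$. *)

From mathcomp Require Import all_boot.
Set Implicit Arguments. Unset Strict Implicit. Unset Printing Implicit Defensive.

Definition simple_graph (T : finType) (e : rel T) : Prop :=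
  symmetric e /\ irreflexive e.

Definition nbhd (T : finType) (e : rel T) (v : T) : {set T} := [set w | e v w].

Definition dominating (T : finType) (e : rel T) (S : {set T}) : bool :=
  [forall v, (v \notin S) ==> [exists w in S, e v w]].

Lemma dominating_exists (T : finType) (e : rel T) :
  exists m, [exists S : {set T}, dominating e S && (#|S| == m)].
Proof.
exists #|[set: T]|; apply/existsP; exists [set: T].
rewrite eqxx andbT; apply/forallP => v; by rewrite in_setT.
Qed.

Definition domination_number (T : finType) (e : rel T) : nat :=
  ex_minn (dominating_exists e).

(* The cycle C_n on vertex set 'I_n (meaningful for n >= 3):
   i ~ j iff j = i+1 mod n or i = j+1 mod n. *)
Definition cycle_rel (n : nat) : rel 'I_n :=
  fun i j => (j == i.+1 %% n :> nat) || (i == j.+1 %% n :> nat).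

Definition is_cover (TG TF : finType) (eG : rel TG) (eF : rel TF)
  (pi : TG -> TF) : Prop :=
  (forall u : TF, exists v : TG, pi v = u) /\
  (forall v : TG,
     {in nbhd eG v &, injective pi} /\ pi @: nbhd eG v = nbhd eF (pi v)).

Definition is_kfold_cover (TG TF : finType) (eG : rel TG) (eF : rel TF)
  (pi : TG -> TF) (k : nat) : Prop :=
  is_cover eG eF pi /\ (forall u : TF, #|[set v | pi v == u]| = k).

From mathcomp Require Import all_boot zify.
Set Implicit Arguments. Unset Strict Implicit. Unset Printing Implicit Defensive.

(* The closed neighbourhoods of a minimum dominating set cover the graph, and
   in a cover of C_n every vertex has degree 2, so #|V(G)| = k n <= 3 gamma(G).
   On the other hand the vertices of C_n with index divisible by 3 dominate it,
   so gamma(C_n) <= ceil(n/3), and 2 ceil(n/3) <= n once n >= 3. *)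

Lemma card_bigcup_leq (T I : finType) (A : {set I}) (F : I -> {set T}) :
  #|\bigcup_(i in A) F i| <= \sum_(i in A) #|F i|.
Proof.
elim/big_rec2: _ => [|i m X _ IH]; first by rewrite cards0.
by apply: leq_trans (leq_card_setU _ _) _; rewrite leq_add2l.
Qed.

Section Domination.

Variables (T : finType) (e : rel T).

Lemma domination_number_min (S : {set T}) :
  dominating e S -> domination_number e <= #|S|.
Proof.
move=> domS; rewrite /domination_number; case: ex_minnP => m _ -> //.
by apply/existsP; exists S; rewrite domS eqxx.
Qed.

Lemma domination_number_witness :
  exists2 S : {set T}, dominating e S & #|S| = domination_number e.
Proof.
rewrite /domination_number; case: ex_minnP => m /existsP [S /andP [domS /eqP]].
by exists S.
Qed.

Lemma card_le_domination_number (d : nat) :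
  symmetric e -> (forall v, #|nbhd e v| <= d) ->
  #|T| <= d.+1 * domination_number e.
Proof.
move=> sym_e deg_e; have [S domS <-] := domination_number_witness.
have cover_closed_nbhd : [set: T] \subset \bigcup_(s in S) (s |: nbhd e s).
  apply/subsetP => v _; have [vS | vNS] := boolP (v \in S).
    by apply/bigcupP; exists v; rewrite // setU11.
  have /existsP [w /andP [wS evw]] := implyP (forallP domS v) vNS.
  by apply/bigcupP; exists w; rewrite // !inE sym_e evw orbT.
rewrite -cardsT (leq_trans (subset_leq_card cover_closed_nbhd)) //.
rewrite (leq_trans (card_bigcup_leq _ _)) // mulnC -sum_nat_const.
apply: leq_sum => s _.
by rewrite (leq_trans (leq_card_setU _ _)) // cards1 add1n ltnS.
Qed.

End Domination.

Section Covers.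

Variables (TG TF : finType) (eG : rel TG) (eF : rel TF) (pi : TG -> TF).

Lemma cover_card_nbhd (v : TG) :
  is_cover eG eF pi -> #|nbhd eG v| = #|nbhd eF (pi v)|.
Proof. by case=> _ /(_ v) [inj_pi <-]; rewrite card_in_imset. Qed.

Lemma kfold_cover_card (k : nat) :
  is_kfold_cover eG eF pi k -> #|TG| = #|TF| * k.
Proof.
case=> _ fibre_k; rewrite -sum1_card (partition_big pi predT) //=.
rewrite -sum_nat_const; apply: eq_bigr => u _.
by rewrite -(fibre_k u) -sum1_card; apply: eq_bigl => v; rewrite inE.
Qed.

End Covers.

Section Cycle.

Variable n : nat.

Lemma card_nbhd_cycle (u : 'I_n) : #|nbhd (@cycle_rel n) u| <= 2.
Proof.
case: n u => [|m] u; first by case: u.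
set succ : 'I_m.+1 := inord (u.+1 %% m.+1).
set pred : 'I_m.+1 := inord ((u + m) %% m.+1).
apply: (@leq_trans #|[set succ; pred]|); last by rewrite cards2; case: (_ != _).
apply: subset_leq_card; apply/subsetP => j.
rewrite !inE /cycle_rel => /orP [/eqP j_succ | /eqP u_succ].
  by apply/orP; left; apply/eqP/val_inj; rewrite /= inordK // ltn_mod.
apply/orP; right; apply/eqP/val_inj; rewrite /= inordK ?ltn_mod // u_succ.
have j_le_m := ltn_ord j; have [j_lt | j_ge] := ltnP j.+1 m.+1.
  by rewrite (modn_small j_lt) addSnnS modnDr modn_small.
have -> : nat_of_ord j = m by lia.
by rewrite modnn add0n modn_small.
Qed.

Definition cycle_dom_mod3 : {set 'I_n} := [set i : 'I_n | i %% 3 == 0].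

Lemma dominating_cycle_dom_mod3 : dominating (@cycle_rel n) cycle_dom_mod3.
Proof.
apply/forallP => i; apply/implyP; rewrite inE => /eqP i_mod3.
have i_lt := ltn_ord i.
have [/eqP i_mod3_1 | i_mod3_2] := boolP (i %% 3 == 1).
  have i_pos : 0 < nat_of_ord i by lia.
  have pred_lt : i.-1 < n by lia.
  apply/existsP; exists (Ordinal pred_lt); rewrite inE /cycle_rel /=.
  by rewrite prednK // (modn_small i_lt) eqxx orbT andbT; apply/eqP; lia.
have succ_lt : i.+1 %% n < n by rewrite ltn_mod; lia.
apply/existsP; exists (Ordinal succ_lt); rewrite inE /cycle_rel /= eqxx andbT.
case: (ltnP i.+1 n) => [succ_in | succ_out].
  by rewrite (modn_small succ_in); apply/eqP; move/eqP: i_mod3_2; lia.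
have -> : i.+1 = n by lia.
by rewrite modnn.
Qed.

Lemma card_cycle_dom_mod3 : #|cycle_dom_mod3| <= (n + 2) %/ 3.
Proof.
have div3_lt (i : 'I_n) : i %/ 3 < (n + 2) %/ 3 by have := ltn_ord i; lia.
have div3_inj : {in cycle_dom_mod3 &, injective (fun i => Ordinal (div3_lt i))}.
  move=> x y; rewrite !inE => /eqP x_mod3 /eqP y_mod3 /(congr1 val) /= xy.
  by apply/val_inj; rewrite /= (divn_eq x 3) (divn_eq y 3) x_mod3 y_mod3 xy.
by rewrite -(card_in_imset div3_inj) (leq_trans (max_card _)) ?card_ord.
Qed.

Lemma domination_number_cycle_leq :
  domination_number (@cycle_rel n) <= (n + 2) %/ 3.
Proof.
exact: leq_trans (domination_number_min dominating_cycle_dom_mod3)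
                 card_cycle_dom_mod3.
Qed.

End Cycle.

Theorem corollary2p5 (n k : nat) (TG : finType) (eG : rel TG)
  (pi : TG -> 'I_n) :
  3 <= n ->
  simple_graph eG ->
  is_kfold_cover eG (@cycle_rel n) pi k ->
  2 * k * domination_number (@cycle_rel n) <= 3 * domination_number eG.
Proof.
move=> n_ge3 [sym_eG _] kcover.
have deg_eG v : #|nbhd eG v| <= 2.
  by rewrite (cover_card_nbhd v kcover.1) card_nbhd_cycle.
have card_TG : n * k <= 3 * domination_number eG.
  by rewrite -[n]card_ord -(kfold_cover_card kcover) card_le_domination_number.
have two_gamma_Cn : 2 * domination_number (@cycle_rel n) <= n.
  by have := domination_number_cycle_leq n; lia.
by rewrite mulnAC (leq_trans _ card_TG) // leq_mul2r two_gamma_Cn orbT.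
Qed.
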